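(* Let $f(x)=\frac1n\sum_{i=1}^nf_i(x)$ on $\mathbb{R}^d$ where each $f_i$ is convex and lower bounded, and let $x^*$ be a minimizer of $f$. Consider the stochastic subgradient method with the DecSPS-NS stepsize (defined in the context) with $c_k=c_0\sqrt{k+1}$ for some $c_0>0$. Then for every $K\ge1$, $$\mathbb{E}[f(\bar x^K)-f(x^* )]\le\frac{D^2/\gamma_\ell+2\gamma_bG^2}{\sqrt K},$$ where $\bar x^K=\frac1K\sum_{k=0}^{K-1}x^k$, $D^2:=\max_{k\in[K-1]}\|x^k-x^*\|^2$ and $G^2:=\max_{k\in[K-1]}\|g_{\mathcal S_k}(x^k)\|^2$.
   Context: Minibatches: fix a batch size $B$; at each iteration a subset $\mathcal S_k\subseteq[n]$, $|\mathcal S_k|=B$, is sampled uniformly at random, independently across iterations. For $\mathcal S\subseteq[n]$, $f_{\mathcal S}:=\frac1{|\mathcal S|}\sum_{i\in\mathcal S}f_i$, $f^*_{\mathcal S}:=\inf_xf_{\mathcal S}(x)$, $\ell^*_{\mathcal S}$ is a given real number with $\ell^*_{\mathcal S}\le f^*_{\mathcal S}$, and $g_{\mathcal S}(x)$ is a subgradient of $f_{\mathcal S}$ at $x$. Method: $x^{k+1}=x^k-\gamma_kg_{\mathcal S_k}(x^k)$. DecSPS-NS stepsize: $\gamma_k:=\frac1{c_k}\min\left\{\max\left\{c_0\gamma_\ell,\ \frac{f_{\mathcal S_k}(x^k)-\ell^*_{\mathcal S_k}}{\|g_{\mathcal S_k}(x^k)\|^2}\right\},\ c_{k-1}\gamma_{k-1}\right\}$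 for $k\ge0$, with $c_{-1}=c_0$, $\gamma_{-1}=\gamma_b$, where $0<\gamma_\ell\le\gamma_b$ are fixed constants. $[K-1]$ denotes $\{0,\dots,K-1\}$. *)

From HB Require Import structures.
From mathcomp Require Import all_boot all_order all_algebra.
From mathcomp Require Import reals.
Set Implicit Arguments. Unset Strict Implicit. Unset Printing Implicit Defensive.
Import Order.TTheory GRing.Theory Num.Theory.
Local Open Scope ring_scope.

Section Defs.
Variables (R : realType) (n d : nat).
Notation vec := 'rV[R]_d.

Definition dotv (u v : vec) : R := \sum_(j < d) u ord0 j * v ord0 j.
Definition normsq (u : vec) : R := dotv u u.

Definition convexf (h : vec -> R) : Prop :=
  forall (x y : vec) (t : R), 0 <= t -> t <= 1 ->
    h (t *: x + (1 - t) *: y) <= t * h x + (1 - t) * h y.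

Definition is_subgrad (h : vec -> R) (x v : vec) : Prop :=
  forall y : vec, h x + dotv v (y - x) <= h y.

Definition favg (f : 'I_n -> vec -> R) (x : vec) : R :=
  n%:R^-1 * \sum_(i < n) f i x.

Definition fS (f : 'I_n -> vec -> R) (S : {set 'I_n}) (x : vec) : R :=
  (#|S|%:R)^-1 * \sum_(i in S) f i x.

Definition csqrt (c0 : R) (k : nat) : R := c0 * Num.sqrt (k.+1)%:R.

(* DecSPS-NS run along a sequence of minibatches s : nat -> {set 'I_n}.
   decsps_state k = (x^k, c_{k-1} * gamma_{k-1}), with c_{-1} gamma_{-1} = c0 gamma_b.
   gamma_k = (1/c_k) min{ max{c0 gamma_l, (f_{S_k}(x^k) - l*_{S_k})/||g_{S_k}(x^k)||^2},
                          c_{k-1} gamma_{k-1} }. *)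
Fixpoint decsps_state (f : 'I_n -> vec -> R) (ell : {set 'I_n} -> R)
    (g : {set 'I_n} -> vec -> vec) (c : nat -> R) (c0 gl gb : R) (x0 : vec)
    (s : nat -> {set 'I_n}) (k : nat) : vec * R :=
  match k with
  | 0 => (x0, c0 * gb)
  | k'.+1 =>
      let st := decsps_state f ell g c c0 gl gb x0 s k' in
      let x := st.1 in
      let prev := st.2 in
      let S := s k' in
      let gk := g S x in
      let m := Num.min (Num.max (c0 * gl) ((fS f S x - ell S) / normsq gk)) prev in
      let gam := m / c k' in
      (x - gam *: gk, c k' * gam)
  end.

Definition decsps_x f ell g c c0 gl gb x0 s k : vec :=
  (decsps_state f ell g c c0 gl gb x0 s k).1.

Definition seq_of (K : nat) (s : {ffun 'I_K -> {set 'I_n}}) (k : nat) : {set 'I_n} :=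
  odflt set0 (omap s (insub k)).

Definition admissible (K B : nat) (s : {ffun 'I_K -> {set 'I_n}}) : bool :=
  [forall k, #|s k| == B].

(* Expectation over S_0,...,S_{K-1} drawn independently and uniformly among
   the subsets of [n] of size B: uniform average over admissible paths. *)
Definition expect (K B : nat) (F : {ffun 'I_K -> {set 'I_n}} -> R) : R :=
  (#|[set s : {ffun 'I_K -> {set 'I_n}} | admissible B s]|%:R)^-1 * \sum_(s : {ffun 'I_K -> {set 'I_n}} | admissible B s) F s.

End Defs.

From HB Require Import structures.
From mathcomp Require Import all_boot all_order all_algebra.
From mathcomp Require Import reals.
From mathcomp Require Import fingroup perm.
From mathcomp Require Import ring lra.
Set Implicit Arguments. Unset Strict Implicit. Unset Printing Implicit Defensive.
Import Order.TTheory GRing.Theory Num.Theory.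
Local Open Scope ring_scope.

(* Along every sample path the subgradient step gives
     f_S(x^k) - f_S(xstar) <= (|x^k - xstar|^2 - |x^(k+1) - xstar|^2) / (2 gamma_k)
                              + gamma_k |g_S(x^k)|^2 / 2,        S = S_k.
   The DecSPS-NS products c_k gamma_k stay in [c_0 gamma_l, c_0 gamma_b] and never
   increase, so gamma_k is nonincreasing and lies between gamma_l / sqrt(k+1) and
   gamma_b / sqrt(k+1); summation by parts then bounds the sum over k < K by
   sqrt K (D^2 / gamma_l + 2 gamma_b G^2).  As x^k depends only on S_0, ..., S_(k-1),
   resampling S_k uniformly replaces f_(S_k) by f in expectation, and Jensen's
   inequality for f (whose subgradients are averages of minibatch subgradients)
   concludes. *)

Section InnerProduct.
Variables (R : realType) (d : nat).
Implicit Types (u v w : 'rV[R]_d).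

Lemma dotvC u v : dotv u v = dotv v u.
Proof. by apply: eq_bigr => j _; rewrite mulrC. Qed.

Lemma dotvDr u v w : dotv u (v + w) = dotv u v + dotv u w.
Proof. by rewrite /dotv -big_split; apply: eq_bigr => j _; rewrite mxE mulrDr. Qed.

Lemma dotv0r u : dotv u 0 = 0.
Proof. by rewrite /dotv big1 // => j _; rewrite mxE mulr0. Qed.

Lemma dotv_sumr (I : Type) (r : seq I) (P : pred I) u (w : I -> 'rV[R]_d) :
  dotv u (\sum_(i <- r | P i) w i) = \sum_(i <- r | P i) dotv u (w i).
Proof. exact: (big_morph _ (dotvDr u) (dotv0r u)). Qed.

Lemma dotv_suml (I : Type) (r : seq I) (P : pred I) (w : I -> 'rV[R]_d) v :
  dotv (\sum_(i <- r | P i) w i) v = \sum_(i <- r | P i) dotv (w i) v.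
Proof. by rewrite dotvC dotv_sumr; apply: eq_bigr => i _; rewrite dotvC. Qed.

Lemma dotvZl a u v : dotv (a *: u) v = a * dotv u v.
Proof. by rewrite /dotv mulr_sumr; apply: eq_bigr => j _; rewrite mxE mulrA. Qed.

Lemma dotvNr u v : dotv u (- v) = - dotv u v.
Proof. by rewrite /dotv -sumrN; apply: eq_bigr => j _; rewrite mxE mulrN. Qed.

Lemma normsq_ge0 u : 0 <= normsq u.
Proof. by apply: sumr_ge0 => j _; rewrite -expr2 sqr_ge0. Qed.

Lemma normsq_subZ u v (t : R) :
  normsq (u - t *: v) = normsq u - 2 * t * dotv v u + t ^+ 2 * normsq v.
Proof.
rewrite /normsq /dotv !mulr_sumr -sumrB -big_split /=.
by apply: eq_bigr => j _; rewrite !mxE; ring.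
Qed.

Lemma subgrad_step_le (h : 'rV[R]_d -> R) x v z (t : R) :
  is_subgrad h x v -> 0 < t ->
  h x - h z <= (normsq (x - z) - normsq (x - t *: v - z)) / (2 * t)
               + t * normsq v / 2.
Proof.
move=> /(_ z) hz t_gt0.
rewrite addrAC normsq_subZ.
have -> : (normsq (x - z) - (normsq (x - z) - 2 * t * dotv v (x - z)
            + t ^+ 2 * normsq v)) / (2 * t) + t * normsq v / 2 = dotv v (x - z).
  by field; rewrite gt_eqF.
by move: hz; rewrite -[z - x]opprB dotvNr; lra.
Qed.

Lemma subgrad_jensen (h : 'rV[R]_d -> R) (K : nat) (X : 'I_K -> 'rV[R]_d) :
  (0 < K)%N -> (forall x, exists v, is_subgrad h x v) ->
  h (K%:R^-1 *: \sum_k X k) <= K%:R^-1 * \sum_k h (X k).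
Proof.
move=> K_gt0 subgr; set xb := K%:R^-1 *: _.
have K_neq0 : K%:R != 0 :> R by rewrite pnatr_eq0 -lt0n.
have [v hv] := subgr xb.
have sum_xb : \sum_(k < K) xb = \sum_k X k.
  by rewrite sumr_const card_ord -scaler_nat scalerA mulfV ?scale1r.
have : \sum_(k < K) (h xb + dotv v (X k - xb)) <= \sum_k h (X k).
  by apply: ler_sum => k _; apply: hv.
rewrite big_split /= -dotv_sumr sumrB sum_xb subrr dotv0r addr0.
by rewrite ler_pdivlMl ?ltr0n // mulr_natl sumr_const card_ord.
Qed.

End InnerProduct.

Section RealSums.
Variable R : realType.

Lemma ler_sum_telescope_weighted (K : nat) (D w : nat -> R) (Dm : R) :
  (0 < K)%N -> (forall k, (k < K)%N -> D k <= Dm) -> (forall k, 0 <= D k) ->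
  (forall k, 0 <= w k) -> (forall k, w k <= w k.+1) ->
  \sum_(k < K) (D k - D k.+1) * w k <= Dm * w K.-1.
Proof.
move=> K_gt0 D_le D_ge0 w_ge0 w_nondecr.
suff partial j : (j < K)%N ->
    \sum_(k < j.+1) (D k - D k.+1) * w k <= (Dm - D j.+1) * w j.
  have := partial K.-1; rewrite prednK // => /(_ (leqnn _)) /le_trans; apply.
  by apply: ler_wpM2r => //; rewrite lerBlDr lerDl.
elim: j => [|j IH] hj; rewrite big_ord_recr /=.
  by rewrite big_ord0 add0r ler_wpM2r // lerD2r D_le.
have := IH (ltnW hj); have := w_nondecr j.
have : 0 <= Dm - D j.+1 by rewrite subr_ge0 D_le.
nra.
Qed.

Lemma sum_inv_sqrt_le (K : nat) :
  \sum_(k < K) (Num.sqrt (k.+1)%:R)^-1 <= 2 * Num.sqrt (K%:R) :> R.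
Proof.
elim: K => [|K IH]; first by rewrite big_ord0 sqrtr0 mulr0.
rewrite big_ord_recr /=.
set a := Num.sqrt (K.+1)%:R; set b := Num.sqrt (K%:R : R) in IH *.
have a_gt0 : 0 < a by rewrite sqrtr_gt0 ltr0n.
have b_ge0 : 0 <= b by rewrite sqrtr_ge0.
have ab : a ^+ 2 = b ^+ 2 + 1 by rewrite !sqr_sqrtr ?ler0n // -natr1.
apply: le_trans (lerD IH (lexx a^-1)) _.
(* 2b + 1/a <= 2a  iff  2ab + 1 <= 2a^2 = 2b^2 + 2, i.e. (a - b)^2 >= 0 *)
rewrite -(ler_pM2r a_gt0) mulrDl mulVf ?gt_eqF //.
have := sqr_ge0 (a - b); nra.
Qed.

End RealSums.

Definition minibatches {T : finType} (B : nat) : {set {set T}} :=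
  [set S : {set T} | #|S| == B].

Section Minibatches.
Variables (R : realType) (T : finType) (B : nat).
Local Notation A := (@minibatches T B).

Lemma card_minibatches_gt0 : (B <= #|T|)%N -> (0 < #|A|)%N.
Proof. by move=> le_BT; rewrite card_draws bin_gt0. Qed.

(* Transposing i and j permutes the B-subsets. *)
Lemma sum_minibatches_mem (i j : T) :
  \sum_(S in A) ((i \in S)%:R : R) = \sum_(S in A) ((j \in S)%:R : R).
Proof.
pose swap := fun S : {set T} => tperm i j @: S.
have swapK : involutive swap.
  move=> S; rewrite /swap -imset_comp (eq_imset _ (g := id)) ?imset_id //.
  by move=> y /=; rewrite tpermK.
rewrite (reindex_inj (inv_inj swapK)); apply: eq_big => S.
  by rewrite !inE card_imset //; apply: perm_inj.
by move=> _; rewrite -{1}(tpermR i j) mem_imset //; apply: perm_inj.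
Qed.

Lemma sum_minibatches (F : T -> R) :
  #|T|%:R * \sum_(S in A) \sum_(i in S) F i = (#|A| * B)%:R * \sum_i F i.
Proof.
have exchange G : \sum_(S in A) \sum_(i in S) G i
                  = \sum_i (\sum_(S in A) ((i \in S)%:R : R)) * G i.
  under eq_bigr => S _ do rewrite big_mkcond.
  rewrite exchange_big; apply: eq_bigr => i _; rewrite mulr_suml.
  by apply: eq_bigr => S _; case: (i \in S); rewrite ?mul1r ?mul0r.
case: (pickP (fun _ : T => true)) => [i0 _ | T0]; last first.
  by rewrite exchange !big_pred0 ?mulr0.
set c := \sum_(S in A) ((i0 \in S)%:R : R).
have sumE G : \sum_(S in A) \sum_(i in S) G i = c * \sum_i G i.
  rewrite exchange mulr_sumr; apply: eq_bigr => i _.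
  by rewrite (sum_minibatches_mem i i0).
have card_c : #|T|%:R * c = (#|A| * B)%:R.
  have := sumE (fun _ => 1).
  rewrite (eq_bigr (fun _ => B%:R)) => [|S]; last first.
    by rewrite inE => /eqP <-; rewrite sumr_const.
  by rewrite !sumr_const natrM !mulr_natl => ->; rewrite mulr_natr.
by rewrite sumE mulrA card_c.
Qed.

End Minibatches.

Section Unbiased.
Variables (R : realType) (n d B : nat) (f : 'I_n -> 'rV[R]_d -> R).
Hypothesis B_range : (0 < B <= n)%N.
Local Notation A := (@minibatches 'I_n B).

Lemma favg_minibatchesE y :
  favg f y = #|A|%:R^-1 * \sum_(S in A) fS f S y.
Proof.
have [B_gt0 B_le_n] := andP B_range.
have A_neq0 : #|A|%:R != 0 :> R.
  by rewrite pnatr_eq0 -lt0n card_minibatches_gt0 // card_ord.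
have n_neq0 : n%:R != 0 :> R by rewrite pnatr_eq0 -lt0n (leq_trans B_gt0).
have B_neq0 : B%:R != 0 :> R by rewrite pnatr_eq0 -lt0n.
have -> : \sum_(S in A) fS f S y = B%:R^-1 * \sum_(S in A) \sum_(i in S) f i y.
  rewrite mulr_sumr; apply: eq_bigr => S.
  by rewrite inE => /eqP S_B; rewrite /fS S_B.
have := @sum_minibatches R _ B (fun i => f i y); rewrite card_ord natrM => sumE.
rewrite -[X in _ * (_ * X)](mulKf n_neq0) sumE /favg.
by field; rewrite A_neq0 n_neq0 B_neq0.
Qed.

Lemma favg_sub_minibatchesE y z :
  favg f y - favg f z = #|A|%:R^-1 * \sum_(S in A) (fS f S y - fS f S z).
Proof. by rewrite !favg_minibatchesE sumrB mulrBr. Qed.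

Section Subgradients.
Variable g : {set 'I_n} -> 'rV[R]_d -> 'rV[R]_d.
Hypothesis subg :
  forall S : {set 'I_n}, #|S| = B -> forall x, is_subgrad (fS f S) x (g S x).

Lemma favg_subgrad y :
  is_subgrad (favg f) y (#|A|%:R^-1 *: \sum_(S in A) g S y).
Proof.
move=> z; rewrite !favg_minibatchesE dotvZl dotv_suml -mulrDr -big_split.
rewrite ler_wpM2l ?invr_ge0 ?ler0n //; apply: ler_sum => S.
by rewrite inE => /eqP /subg; apply.
Qed.

Lemma favg_jensen_sub (K : nat) (X : 'I_K -> 'rV[R]_d) z : (0 < K)%N ->
  favg f (K%:R^-1 *: \sum_k X k) - favg f z
    <= K%:R^-1 * \sum_k (favg f (X k) - favg f z).
Proof.
move=> K_gt0; rewrite sumrB sumr_const card_ord mulrBr.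
rewrite -[favg f z *+ K]mulr_natl mulKf ?pnatr_eq0 -?lt0n // lerD2r.
by apply: subgrad_jensen => // y; exact: ex_intro _ _ (favg_subgrad y).
Qed.

End Subgradients.

End Unbiased.

Definition ffun_upd {I V : finType} (s : {ffun I -> V}) (k : I) (v : V) :
  {ffun I -> V} := [ffun j => if j == k then v else s j].

Section Resampling.
Variables (R : realType) (I V : finType) (A : {set V}).
Local Notation path := {ffun I -> V}.
Implicit Types (s : path) (k : I) (v : V).

Lemma ffun_upd_in s k v :
  [forall j, ffun_upd s k v j \in A] && (s k \in A)
  = [forall j, s j \in A] && (v \in A).
Proof.
apply/andP/andP => [[/forallP s'A skA] | [/forallP sA vA]]; split.
- apply/forallP => j; case: (eqVneq j k) => [-> //|ne_jk].
  by have := s'A j; rewrite ffunE (negbTE ne_jk).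
- by have := s'A k; rewrite ffunE eqxx.
- by apply/forallP => j; rewrite ffunE; case: eqP.
- exact: sA.
Qed.

(* Swapping the k-th coordinate of a path with a fresh sample is a bijection
   on pairs (path, sample). *)
Lemma sum_resample k (H : path -> V -> R) :
  (forall s v w, H (ffun_upd s k w) v = H s v) ->
  #|A|%:R * \sum_(s : path | [forall j, s j \in A]) H s (s k)
  = \sum_(s : path | [forall j, s j \in A]) \sum_(v in A) H s v.
Proof.
move=> H_upd; rewrite pair_big_dep /=.
pose swap := fun p : path * V => (ffun_upd p.1 k p.2, p.1 k).
have swapK : involutive swap.
  move=> [s v]; rewrite /swap /= ffunE eqxx; congr pair.
  by apply/ffunP => j; rewrite !ffunE; case: eqP => // ->.
rewrite (reindex_inj (inv_inj swapK)) /=.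
rewrite (eq_big (fun p : path * V => [forall j, p.1 j \in A] && (p.2 \in A))
                (fun p => H p.1 (p.1 k))); first last.
- by move=> p _; rewrite /swap /= H_upd.
- by move=> p; rewrite /swap /= ffun_upd_in.
rewrite -(pair_big_dep (fun s => [forall j, s j \in A]) (fun _ v => v \in A)
                       (fun s _ => H s (s k))) /=.
by rewrite mulr_sumr; apply: eq_bigr => s _; rewrite sumr_const mulr_natl.
Qed.

End Resampling.

Section Expectation.
Variables (R : realType) (n K B : nat).
Local Notation path := {ffun 'I_K -> {set 'I_n}}.
Local Notation A := (@minibatches 'I_n B).
Implicit Types F G : path -> R.

Lemma admissibleE (s : path) : admissible B s = [forall k, s k \in A].
Proof. by apply: eq_forallb => k; rewrite inE. Qed.

Lemma seq_of_ord (s : path) (k : 'I_K) : seq_of s k = s k.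
Proof. by rewrite /seq_of valK. Qed.

Lemma seq_of_upd (s : path) (k : 'I_K) U (j : nat) :
  j != k -> seq_of (ffun_upd s k U) j = seq_of s j.
Proof.
rewrite /seq_of; case: insubP => [j' _ <- ne_jk|] //=.
by rewrite ffunE ifN.
Qed.

Lemma ler_expect F G :
  (forall s, admissible B s -> F s <= G s) -> expect B F <= expect B G.
Proof. by move=> le_FG; rewrite ler_wpM2l ?invr_ge0 ?ler0n // ler_sum. Qed.

Lemma eq_expect F G :
  (forall s, admissible B s -> F s = G s) -> expect B F = expect B G.
Proof. by move=> eq_FG; rewrite /expect; congr (_ * _); apply: eq_bigr. Qed.

Lemma expectZl (a : R) F : expect B (fun s => a * F s) = a * expect B F.
Proof. by rewrite /expect -mulr_sumr mulrCA. Qed.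

Lemma expect_sum_resample (H : 'I_K -> path -> {set 'I_n} -> R) :
  (B <= n)%N -> (forall k s S U, H k (ffun_upd s k U) S = H k s S) ->
  expect B (fun s => \sum_k H k s (s k))
  = expect B (fun s => \sum_k #|A|%:R^-1 * \sum_(S in A) H k s S).
Proof.
move=> B_le_n H_upd; rewrite /expect; congr (_ * _).
rewrite exchange_big [RHS]exchange_big; apply: eq_bigr => k _ /=.
have A_neq0 : #|A|%:R != 0 :> R.
  by rewrite pnatr_eq0 -lt0n card_minibatches_gt0 // card_ord.
rewrite -mulr_sumr !(eq_bigl _ _ admissibleE).
by rewrite -(@sum_resample R _ _ A k _ (H_upd k)) mulKf.
Qed.

End Expectation.

Section DecSPS.
Variables (R : realType) (n d : nat) (f : 'I_n -> 'rV[R]_d -> R)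
  (ell : {set 'I_n} -> R) (g : {set 'I_n} -> 'rV[R]_d -> 'rV[R]_d)
  (c : nat -> R) (c0 gl gb : R) (x0 : 'rV[R]_d).
Hypotheses (c0_gt0 : 0 < c0) (gl_gt0 : 0 < gl) (gl_le_gb : gl <= gb).
Hypotheses (c_gt0 : forall k, 0 < c k) (c_nondecr : forall k, c k <= c k.+1).
Implicit Types (s : nat -> {set 'I_n}) (k : nat).

Local Notation state s k := (decsps_state f ell g c c0 gl gb x0 s k).
Local Notation x s k := (decsps_x f ell g c c0 gl gb x0 s k).

Definition decsps_step s k := (state s k.+1).2 / c k.
Local Notation gamma := decsps_step.

Lemma decsps_state_ext s1 s2 k :
  (forall j, (j < k)%N -> s1 j = s2 j) -> state s1 k = state s2 k.
Proof.
elim: k => [//|k IH] eq_s /=.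
by rewrite IH ?eq_s // => j lt_jk; apply: eq_s; apply: ltnW.
Qed.

Lemma decsps_prod_succ s k :
  (state s k.+1).2 = Num.min (Num.max (c0 * gl)
     ((fS f (s k) (x s k) - ell (s k)) / normsq (g (s k) (x s k)))) (state s k).2.
Proof. by rewrite /= mulrC divfK // gt_eqF. Qed.

Lemma decsps_x_succ s k : x s k.+1 = x s k - gamma s k *: g (s k) (x s k).
Proof. by rewrite /gamma decsps_prod_succ. Qed.

Lemma decsps_prod_bounds s k : c0 * gl <= (state s k).2 <= c0 * gb.
Proof.
elim: k => [|k /andP[ge_gl le_gb]]; first by rewrite /= lexx andbT ler_pM2l.
by rewrite decsps_prod_succ le_min le_max lexx ge_gl /= ge_min le_gb orbT.
Qed.

Lemma decsps_prod_nonincr s k : (state s k.+1).2 <= (state s k).2.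
Proof. by rewrite decsps_prod_succ ge_min lexx orbT. Qed.

Lemma decsps_step_ge s k : c0 * gl / c k <= gamma s k.
Proof.
by rewrite ler_pM2r ?invr_gt0 //; case/andP: (decsps_prod_bounds s k.+1).
Qed.

Lemma decsps_step_le s k : gamma s k <= c0 * gb / c k.
Proof.
by rewrite ler_pM2r ?invr_gt0 //; case/andP: (decsps_prod_bounds s k.+1).
Qed.

Lemma decsps_step_gt0 s k : 0 < gamma s k.
Proof. by apply: lt_le_trans (decsps_step_ge s k); rewrite !mulr_gt0 ?invr_gt0. Qed.

Lemma decsps_step_nonincr s k : gamma s k.+1 <= gamma s k.
Proof.
have prod_ge0 : 0 <= (state s k.+2).2.
  case/andP: (decsps_prod_bounds s k.+2) => + _; apply: le_trans.
  by rewrite mulr_ge0 ?ltW.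
apply: (@le_trans _ _ ((state s k.+2).2 / c k)).
  by rewrite ler_wpM2l // lef_pV2 ?posrE.
by rewrite ler_pM2r ?invr_gt0 // decsps_prod_nonincr.
Qed.

Lemma decsps_regret s K xstar Dm Gm :
  (0 < K)%N ->
  (forall k, (k < K)%N -> is_subgrad (fS f (s k)) (x s k) (g (s k) (x s k))) ->
  (forall k, (k < K)%N -> normsq (x s k - xstar) <= Dm) ->
  (forall k, (k < K)%N -> normsq (g (s k) (x s k)) <= Gm) ->
  \sum_(k < K) (fS f (s k) (x s k) - fS f (s k) xstar)
    <= (Dm / gamma s K.-1 + Gm * \sum_(k < K) gamma s k) / 2.
Proof.
move=> K_gt0 subg D_le G_le.
pose D k := normsq (x s k - xstar).
pose w k := (gamma s k)^-1.
have descent (k : 'I_K) : fS f (s k) (x s k) - fS f (s k) xstar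
    <= (D k - D k.+1) * w k / 2 + gamma s k * Gm / 2.
  have := subgrad_step_le xstar (subg k (ltn_ord k)) (decsps_step_gt0 s k).
  rewrite -decsps_x_succ invfM mulrA mulrAC => /le_trans; apply.
  apply: lerD; first exact: lexx.
  by rewrite ler_pM2r ?invr_gt0 // ler_pM2l ?decsps_step_gt0 // G_le.
apply: le_trans (ler_sum _ (fun (k : 'I_K) _ => descent k)) _.
rewrite big_split /= -!mulr_suml -mulrDl ler_pM2r ?invr_gt0 // [_ * Gm]mulrC.
rewrite lerD2r ler_sum_telescope_weighted // => k; rewrite /D /w.
- exact: normsq_ge0.
- by rewrite invr_ge0 ltW // decsps_step_gt0.
- by rewrite lef_pV2 ?posrE ?decsps_step_gt0 ?decsps_step_nonincr.
Qed.

Lemma decsps_x_upd K (s : {ffun 'I_K -> {set 'I_n}}) (k : 'I_K) U :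
  x (seq_of (ffun_upd s k U)) k = x (seq_of s) k.
Proof.
rewrite /decsps_x; congr fst; apply: decsps_state_ext => j lt_jk.
by rewrite seq_of_upd // neq_ltn lt_jk.
Qed.

End DecSPS.

Section SqrtSchedule.
Variables (R : realType) (c0 : R).
Hypothesis c0_gt0 : 0 < c0.

Lemma csqrt_gt0 k : 0 < csqrt c0 k.
Proof. by rewrite mulr_gt0 // sqrtr_gt0 ltr0n. Qed.

Lemma csqrt_nondecr k : csqrt c0 k <= csqrt c0 k.+1.
Proof. by rewrite ler_pM2l // ler_sqrt ?ler_nat ?ltr0n. Qed.

Lemma mul_div_csqrt (a : R) k : c0 * a / csqrt c0 k = a / Num.sqrt (k.+1)%:R.
Proof.
have sqrt_neq0 : Num.sqrt (k.+1)%:R != 0 :> R by rewrite gt_eqF // sqrtr_gt0 ltr0n.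
by rewrite /csqrt; field; rewrite sqrt_neq0 gt_eqF.
Qed.

End SqrtSchedule.

Section DecSPSSqrt.
Variables (R : realType) (n d : nat) (f : 'I_n -> 'rV[R]_d -> R)
  (ell : {set 'I_n} -> R) (g : {set 'I_n} -> 'rV[R]_d -> 'rV[R]_d)
  (c0 gl gb : R) (x0 : 'rV[R]_d).
Hypotheses (c0_gt0 : 0 < c0) (gl_gt0 : 0 < gl) (gl_le_gb : gl <= gb).
Implicit Types (s : nat -> {set 'I_n}) (k : nat).

Local Notation x s k := (decsps_x f ell g (csqrt c0) c0 gl gb x0 s k).
Local Notation gamma := (decsps_step f ell g (csqrt c0) c0 gl gb x0).

Let c_gt0 := csqrt_gt0 c0_gt0.
Let c_nondecr := csqrt_nondecr c0_gt0.

Lemma decsps_sqrt_step_ge s k : gl / Num.sqrt (k.+1)%:R <= gamma s k.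
Proof.
by rewrite -(mul_div_csqrt c0_gt0); apply: decsps_step_ge gl_le_gb c_gt0 _ _.
Qed.

Lemma decsps_sqrt_sum_steps_le s K :
  \sum_(k < K) gamma s k <= 2 * gb * Num.sqrt K%:R.
Proof.
have gb_ge0 : 0 <= gb := le_trans (ltW gl_gt0) gl_le_gb.
apply: le_trans (_ : \sum_(k < K) gb * (Num.sqrt (k.+1)%:R)^-1 <= _).
  apply: ler_sum => k _; rewrite -(mul_div_csqrt c0_gt0).
  exact: decsps_step_le.
by rewrite -mulr_sumr [2 * gb]mulrC -mulrA ler_wpM2l ?sum_inv_sqrt_le.
Qed.

Lemma decsps_sqrt_avg_regret s K xstar Dm Gm :
  (0 < K)%N ->
  (forall k, (k < K)%N -> is_subgrad (fS f (s k)) (x s k) (g (s k) (x s k))) ->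
  (forall k, (k < K)%N -> normsq (x s k - xstar) <= Dm) ->
  (forall k, (k < K)%N -> normsq (g (s k) (x s k)) <= Gm) ->
  K%:R^-1 * \sum_(k < K) (fS f (s k) (x s k) - fS f (s k) xstar)
    <= (Dm / gl + 2 * gb * Gm) / Num.sqrt K%:R.
Proof.
move=> K_gt0 subg D_le G_le.
have regret :=
  decsps_regret c0_gt0 gl_gt0 gl_le_gb c_gt0 c_nondecr K_gt0 subg D_le G_le.
have Dm_ge0 : 0 <= Dm by apply: le_trans (D_le 0%N K_gt0); apply: normsq_ge0.
have Gm_ge0 : 0 <= Gm by apply: le_trans (G_le 0%N K_gt0); apply: normsq_ge0.
have gb_ge0 : 0 <= gb := le_trans (ltW gl_gt0) gl_le_gb.
set q := Num.sqrt K%:R.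
have q_gt0 : 0 < q by rewrite sqrtr_gt0 ltr0n.
have inv_last_step_le : (gamma s K.-1)^-1 <= q / gl.
  have := decsps_sqrt_step_ge s K.-1; rewrite prednK // -/q => step_ge.
  have step_gt0 := lt_le_trans (divr_gt0 gl_gt0 q_gt0) step_ge.
  by rewrite -invf_div lef_pV2 // posrE // divr_gt0.
have -> : (Dm / gl + 2 * gb * Gm) / q = K%:R^-1 * (q * (Dm / gl + 2 * gb * Gm)).
  by rewrite -[K%:R](sqr_sqrtr (ler0n _ K)) -/q; field; rewrite !gt_eqF.
rewrite ler_wpM2l ?invr_ge0 ?ler0n // (le_trans regret) //.
have := ler_wpM2l Dm_ge0 inv_last_step_le.
have := ler_wpM2l Gm_ge0 (decsps_sqrt_sum_steps_le s K); rewrite -/q.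
have : 0 <= Dm * (q / gl) by rewrite mulr_ge0 // divr_ge0 // ltW.
have : 0 <= Gm * (2 * gb * q) by rewrite !mulr_ge0 // ltW.
lra.
Qed.

End DecSPSSqrt.

Theorem corollary3 (R : realType) (n d B : nat)
  (f : 'I_n -> 'rV[R]_d -> R) (ell : {set 'I_n} -> R)
  (g : {set 'I_n} -> 'rV[R]_d -> 'rV[R]_d)
  (x0 xstar : 'rV[R]_d) (c0 gl gb : R) (K : nat) :
  (0 < B <= n)%N ->
  (forall i, convexf (f i)) ->
  (forall i, exists m : R, forall x, m <= f i x) ->
  (forall x, favg f xstar <= favg f x) ->
  (forall S : {set 'I_n}, #|S| = B -> forall x, ell S <= fS f S x) ->
  (forall S : {set 'I_n}, #|S| = B -> forall x, is_subgrad (fS f S) x (g S x)) ->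
  0 < c0 -> 0 < gl -> gl <= gb -> (1 <= K)%N ->
  let x := fun (s : {ffun 'I_K -> {set 'I_n}}) (k : nat) =>
    decsps_x f ell g (csqrt c0) c0 gl gb x0 (seq_of s) k in
  let xbar := fun s => K%:R^-1 *: \sum_(k < K) x s k in
  let Dsq := fun s => \big[Num.max/0]_(k < K) normsq (x s k - xstar) in
  let Gsq := fun s => \big[Num.max/0]_(k < K) normsq (g (seq_of s k) (x s k)) in
  expect B (fun s => favg f (xbar s) - favg f xstar)
    <= expect B (fun s => (Dsq s / gl + 2 * gb * Gsq s) / Num.sqrt K%:R).
Proof.
move=> B_range _ _ _ _ subgS c0_gt0 gl_gt0 gl_le_gb K_gt0; cbv zeta.
pose x := fun (s : {ffun 'I_K -> {set 'I_n}}) (k : nat) =>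
  decsps_x f ell g (csqrt c0) c0 gl gb x0 (seq_of s) k.
have unbiased s : \sum_(k < K) (favg f (x s k) - favg f xstar)
    = \sum_(k < K) #|@minibatches 'I_n B|%:R^-1
        * \sum_(S in minibatches B) (fS f S (x s k) - fS f S xstar).
  by apply: eq_bigr => k _; apply: favg_sub_minibatchesE.
apply: le_trans
  (ler_expect (fun s _ => favg_jensen_sub B_range subgS (x s) xstar K_gt0)) _.
rewrite expectZl (eq_expect (fun s _ => unbiased s)).
rewrite -expect_sum_resample; first last.
- by move=> k s S U; rewrite /x decsps_x_upd.
- by case/andP: B_range.
rewrite -expectZl; apply: ler_expect => s adm.
under eq_bigr => k _ do rewrite -seq_of_ord.
apply: decsps_sqrt_avg_regret => // k lt_kK.
- by apply: subgS; rewrite (seq_of_ord s (Ordinal lt_kK)); apply/eqP/(forallP adm).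
- exact: (le_bigmax _ (fun k : 'I_K => normsq (x s k - xstar)) (Ordinal lt_kK)).
- exact: (le_bigmax _ (fun k : 'I_K => normsq (g (seq_of s k) (x s k)))
                    (Ordinal lt_kK)).
Qed.
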